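(* Let $a,b,c\ge 2$ be integers. Then the ring $A=\mathbb{C}[X,Y,Z]/(X^aY^b-Z^c)$ is rigid (this includes the cases where $\gcd(a,b,c)>1$, in which $A$ is not a domain).
   Context: A locally nilpotent derivation (LND) of a $\mathbb{C}$-algebra $A$ is a $\mathbb{C}$-linear derivation $D$ such that every $a\in A$ satisfies $D^n(a)=0$ for some $n$. A ring is rigid if its only LND is the zero derivation. *)

(* C[X,Y,Z] is modelled as nested univariate polynomials
   {poly {poly {poly F}}} (innermost variable X, middle Y, outer Z), and the
   quotient ring is MathComp's ring quotient by a (classically decided)
   principal ideal. *)
From HB Require Import structures.
From mathcomp Require Import all_boot all_order all_algebra.
From mathcomp Require Import generic_quotient ring_quotient.
From Stdlib Require Import ClassicalEpsilon.
Set Implicit Arguments. Unset Strict Implicit. Unset Printing Implicit Defensive.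
Import Order.TTheory GRing.Theory Num.Theory.
Local Open Scope ring_scope.
Local Open Scope quotient_scope.

Definition is_derivation (F : fieldType) (A : comNzRingType) (iota : F -> A)
  (D : A -> A) : Prop :=
  [/\ forall x y, D (x + y) = D x + D y,
      forall (k : F) x, D (iota k * x) = iota k * D x
    & forall x y, D (x * y) = D x * y + x * D y].

Definition locally_nilpotent (A : comNzRingType) (D : A -> A) : Prop :=
  forall x, exists n : nat, iter n D x = 0.

Definition rigid (F : fieldType) (A : comNzRingType) (iota : F -> A) : Prop :=
  forall D : A -> A, is_derivation iota D -> locally_nilpotent D ->
    forall x, D x = 0.

Section Quot.
Variables (F : fieldType) (a b c : nat).

Definition PR := {poly {poly {poly F}}}.
Definition varX : PR := ('X%:P)%:P.
Definition varY : PR := ('X)%:P.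
Definition varZ : PR := 'X.
Definition const (k : F) : PR := k%:P%:P%:P.

Definition fXYZ : PR := varX ^+ a * varY ^+ b - varZ ^+ c.

Definition in_ideal_f (p : PR) : bool :=
  if excluded_middle_informative (exists h : PR, p = h * fXYZ) then true
  else false.

Definition ideal_f : {pred PR} := fun p => in_ideal_f p.

Lemma in_ideal_fP p : reflect (exists h : PR, p = h * fXYZ) (p \in ideal_f).
Proof.
rewrite unfold_in /= /in_ideal_f.
by case: excluded_middle_informative => H; constructor.
Qed.

Lemma fXYZ_eval1 : fXYZ.[1].[1].[1] = 0.
Proof.
rewrite /fXYZ /varX /varY /varZ !hornerE.
by rewrite ?expr1n ?mulr1 ?subrr ?hornerE.
Qed.

Lemma ideal_f_closed : idealr_closed ideal_f.
Proof.
split.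
- by apply/in_ideal_fP; exists 0; rewrite mul0r.
- apply/in_ideal_fP => -[h Hh].
  have := congr1 (fun p : PR => p.[1].[1].[1]) Hh.
  by rewrite /= !hornerM fXYZ_eval1 !mulr0 !hornerE => /eqP; rewrite oner_eq0.
- move=> r u v /in_ideal_fP [h1 ->] /in_ideal_fP [h2 ->].
  by apply/in_ideal_fP; exists (r * h1 + h2); rewrite mulrDl mulrA.
Qed.

HB.instance Definition _ := isIdealr.Build PR ideal_f ideal_f_closed.

Definition Aring : comNzRingType := {ideal_quot ideal_f}.

Definition iotaA (k : F) : Aring := \pi_(Aring) (const k).

End Quot.

From HB Require Import structures.
From mathcomp Require Import all_boot all_order all_algebra all_field zify.
From mathcomp Require Import generic_quotient ring_quotient.
Set Implicit Arguments. Unset Strict Implicit. Unset Printing Implicit Defensive.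
Import GRing.Theory Num.Theory.
Local Open Scope ring_scope.

(* Let D be a locally nilpotent derivation of A and psi : A -> C a point of the
   surface x^a y^b = z^c.  The map u |-> sum_i psi (D^i u) t^i / i! is a
   C-algebra morphism A -> C[t] turning D into d/dt, so the points psi_t it
   defines form a polynomial curve through psi.  Differentiating the relation
   shows, since a, b, c >= 2, that D x and D z lie in (x, z) while D y and D z
   lie in (y, z).  Hence a curve starting on the y-axis x = z = 0 stays on it,
   where y(t) solves an autonomous equation y' = g(y) with g(0) = 0 and is
   therefore constant: D vanishes at every point of both axes.  Now every curve
   is constant: if x(t) is not, it meets x = 0, hence z = 0, i.e. an axis, and
   likewise for y; if x and y are constant then so is z.  Thus D u vanishes at
   every point, and points separate the elements of A. *)

Section PolyDerivative.
Variable R : numDomainType.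
Implicit Types p q g y : {poly R}.

Lemma deriv_eq0_polyC p : p^`() = 0 -> p = (p`_0)%:P.
Proof.
move=> p'0; apply/polyP => -[|i]; rewrite coefC //=.
have /eqP := congr1 (fun q => q`_i) p'0.
by rewrite coef_deriv coef0 mulrn_eq0 => /eqP.
Qed.

Lemma eq_poly_deriv p q : p^`() = q^`() -> p.[0] = q.[0] -> p = q.
Proof.
move=> eq_pq' eq_pq0; apply/eqP; rewrite -subr_eq0; apply/eqP.
have /deriv_eq0_polyC -> : (p - q)^`() = 0 by rewrite derivB eq_pq' subrr.
by rewrite -horner_coef0 hornerD hornerN eq_pq0 subrr.
Qed.

Lemma derivn_horner_eq0 t q : (forall k, q^`(k).[t] = 0) -> q = 0.
Proof.
elim: {q}(size q) {-2}q (leqnn (size q)) => [|n IHn] q size_q qt0.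
  by apply/eqP; rewrite -size_poly_eq0 -leqn0.
have /deriv_eq0_polyC q'0 : q^`() = 0.
  apply: IHn => [|k]; last by rewrite -derivSn.
  have [->|q_neq0] := eqVneq q 0; first by rewrite deriv0 size_poly0.
  by rewrite -ltnS (leq_trans (lt_size_deriv q_neq0)).
by have := qt0 0%N; rewrite derivn0 q'0 hornerC q'0 => ->.
Qed.

Lemma poly_eq0_nonzero p : (forall t, t != 0 -> p.[t] = 0) -> p = 0.
Proof.
move=> p0; apply/eqP/negPn/negP => p_neq0.
suff : (size [seq (i.+1%:R : R) | i <- iota 0 (size p)] < size p)%N.
  by rewrite size_map size_iota ltnn.
apply: max_poly_roots p_neq0 _ _.
  by apply/allP => _ /mapP[i _ ->]; rewrite /root p0 // pnatr_eq0.
by rewrite map_inj_uniq ?iota_uniq // => i j /eqP; rewrite eqr_nat => /eqP[].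
Qed.

Lemma linear_ode_eq0 (x z gx hx gz hz : {poly R}) :
  x^`() = x * gx + z * hx -> z^`() = x * gz + z * hz ->
  x`_0 = 0 -> z`_0 = 0 -> x = 0 /\ z = 0.
Proof.
move=> x' z' x0 z0.
suff xz0 n i : (i <= n)%N -> x`_i = 0 /\ z`_i = 0.
  by split; apply/polyP => i; rewrite coef0; have [] := xz0 i i (leqnn i).
elim: n i => [|n IHn] i; first by rewrite leqn0 => /eqP ->.
rewrite leq_eqVlt => /orP[/eqP ->|]; last exact: IHn.
have coef_n (gu gv : {poly R}) : (x * gu + z * gv)`_n = 0.
  rewrite coefD !coefM !big1 ?addr0 // => j _;
    by have [xj0 zj0] := IHn j (leq_ord j); rewrite ?xj0 ?zj0 mul0r.
have /eqP := congr1 (fun q => q`_n) x'; have /eqP := congr1 (fun q => q`_n) z'.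
by rewrite /= !coef_deriv !coef_n !mulrn_eq0 /= => /eqP-> /eqP->.
Qed.

End PolyDerivative.

Lemma size_exp_leq1 (R : idomainType) (p : {poly R}) n :
  (0 < n)%N -> (size (p ^+ n) <= 1)%N -> (size p <= 1)%N.
Proof. by have := size_exp p n; move: (size p) (size _) => m k; nia. Qed.

Lemma deriv_eq_comp_eq0 (R : idomainType) (y g : {poly R}) :
  y^`() = g \Po y -> g.[0] = 0 -> y^`() = 0.
Proof.
move=> y' g0; have [/size1_polyC->|y_gt1] := leqP (size y) 1; first exact: derivC.
have [/size1_polyC g_cst|g_gt1] := leqP (size g) 1.
  by rewrite y' g_cst comp_polyC -horner_coef0 g0.
have y_neq0 : y != 0 by rewrite -size_poly_gt0 ltnW.
have := lt_size_deriv y_neq0; have := size_comp_poly g y; rewrite -y'.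
move: (size g) (size y) (size _) g_gt1 y_gt1 => m n k m_gt1 n_gt1; nia.
Qed.

Section Derivation.
Variables (F : fieldType) (A : comNzRingType) (iota : F -> A) (D : A -> A).
Hypothesis derD : is_derivation iota D.

Lemma derivationD u v : D (u + v) = D u + D v.
Proof. by case: derD => DD _ _; apply: DD. Qed.

Lemma derivationM u v : D (u * v) = D u * v + u * D v.
Proof. by case: derD => _ _ DM; apply: DM. Qed.

Lemma derivation0 : D 0 = 0.
Proof. by apply: (addrI (D 0)); rewrite -derivationD !addr0. Qed.

Lemma derivation1 : D 1 = 0.
Proof.
have := derivationM 1 1; rewrite !mulr1 mul1r => D1.
by apply: (addrI (D 1)); rewrite addr0 -D1.
Qed.

Lemma derivation_iota k : D (iota k) = 0.
Proof. by case: derD => _ Dk _; rewrite -[iota k]mulr1 Dk derivation1 mulr0. Qed.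

Lemma derivationX u n : D (u ^+ n) = (u ^+ n.-1 * D u) *+ n.
Proof.
case: n => [|n]; first by rewrite expr0 derivation1 mulr0n.
elim: n => [|n IHn]; first by rewrite expr1 expr0 mul1r.
by rewrite exprS derivationM IHn mulrnAr mulrA -exprS [D u * _]mulrC -mulrS.
Qed.

Lemma iter_derivationD n u v : iter n D (u + v) = iter n D u + iter n D v.
Proof. by elim: n => //= n ->; rewrite derivationD. Qed.

Lemma iter_derivation0 n : iter n D 0 = 0.
Proof. by elim: n => //= n ->; rewrite derivation0. Qed.

Hypothesis lnD : locally_nilpotent D.

Let lnD_bool u : exists n, iter n D u == 0.
Proof. by have [n Dnu] := lnD u; exists n; apply/eqP. Qed.

Definition nil_index u : nat := ex_minn (lnD_bool u).

Lemma iter_nil_index u m : (nil_index u <= m)%N -> iter m D u = 0.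
Proof.
rewrite /nil_index; case: ex_minnP => n /eqP Dnu _ /subnK <-.
by elim: (m - n)%N => //= k ->; rewrite derivation0.
Qed.

Lemma nil_index_eq0 u : nil_index u = 0%N -> u = 0.
Proof. by move=> Nu0; apply: (@iter_nil_index u 0); rewrite Nu0. Qed.

Lemma nil_index_deriv u : u != 0 -> (nil_index (D u) < nil_index u)%N.
Proof.
move=> u_neq0; have Nu_gt0 : (0 < nil_index u)%N.
  by rewrite lt0n; apply: contraNneq u_neq0 => /nil_index_eq0 ->.
rewrite /(nil_index (D u)); case: ex_minnP => n _ /(_ (nil_index u).-1) min_n.
rewrite (leq_ltn_trans (min_n _)) ?ltn_predL //.
by rewrite -iterSr prednK // iter_nil_index.
Qed.

End Derivation.

Definition is_point (F : fieldType) (A : comNzRingType) (iota : F -> A)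
    (psi : A -> F) : Prop :=
  [/\ forall u v, psi (u + v) = psi u + psi v,
      forall u v, psi (u * v) = psi u * psi v
    & forall k, psi (iota k) = k].

Section Point.
Variables (F : fieldType) (A : comNzRingType) (iota : F -> A) (psi : A -> F).
Hypothesis pt_psi : is_point iota psi.

Lemma pointD u v : psi (u + v) = psi u + psi v.
Proof. by case: pt_psi => pD _ _; apply: pD. Qed.
Lemma pointM u v : psi (u * v) = psi u * psi v.
Proof. by case: pt_psi => _ pM _; apply: pM. Qed.
Lemma point_iota k : psi (iota k) = k.
Proof. by case: pt_psi => _ _ pk; apply: pk. Qed.

Lemma point0 : psi 0 = 0.
Proof. by apply: (addrI (psi 0)); rewrite -pointD !addr0. Qed.

Lemma point1 : psi 1 = 1.
Proof.
by have := pointM 1 (iota 1); rewrite mul1r !point_iota mulr1 => <-.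
Qed.

End Point.

Definition in_ideal2 (A : comNzRingType) (s t u : A) : Prop :=
  exists g h, u = s * g + t * h.

Lemma point_in_ideal2 (F : fieldType) (A : comNzRingType) (iota : F -> A) psi s t u :
  is_point iota psi -> in_ideal2 s t u -> psi s = 0 -> psi t = 0 -> psi u = 0.
Proof.
move=> pt_psi [g [h ->]] s0 t0.
by rewrite (pointD pt_psi) !(pointM pt_psi) s0 t0 !mul0r addr0.
Qed.

(* [taylor u] is the Taylor expansion of t |-> psi (exp (t D) u). *)
Section Taylor.
Variables (F : numFieldType) (A : comNzRingType) (iota : F -> A) (D : A -> A).
Hypotheses (derD : is_derivation iota D) (lnD : locally_nilpotent D).
Variable psi : A -> F.
Hypothesis pt_psi : is_point iota psi.

Definition taylor (u : A) : {poly F} :=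
  \poly_(i < nil_index lnD u) (psi (iter i D u) / i`!%:R).

Lemma coef_taylor u i : (taylor u)`_i = psi (iter i D u) / i`!%:R.
Proof.
rewrite coef_poly; case: ltnP => // Nu_le_i.
by rewrite (iter_nil_index derD) // (point0 pt_psi) mul0r.
Qed.

Lemma taylorD u v : taylor (u + v) = taylor u + taylor v.
Proof.
apply/polyP => i.
by rewrite coefD !coef_taylor (iter_derivationD derD) (pointD pt_psi) mulrDl.
Qed.

Lemma taylor0 : taylor 0 = 0.
Proof.
apply/polyP => i.
by rewrite coef_taylor (iter_derivation0 derD) (point0 pt_psi) mul0r coef0.
Qed.

Lemma taylor_deriv u : taylor (D u) = (taylor u)^`().
Proof.
apply/polyP => i; rewrite coef_deriv !coef_taylor -iterSr factS natrM.
rewrite -[RHS]mulr_natr -mulrA; congr (_ * _).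
by rewrite invfM mulrAC mulVf ?mul1r // pnatr_eq0.
Qed.

Lemma taylor_iter k u : taylor (iter k D u) = (taylor u)^`(k).
Proof. by elim: k => [|k IHk]; rewrite ?derivn0 // derivnS -IHk -taylor_deriv. Qed.

Lemma horner_taylor0 u : (taylor u).[0] = psi u.
Proof. by rewrite horner_coef0 coef_taylor divr1. Qed.

Lemma taylor_iota k : taylor (iota k) = k%:P.
Proof.
apply/polyP => -[|i]; rewrite coef_taylor coefC /= ?(point_iota pt_psi) ?divr1 //.
rewrite -iterS iterSr (derivation_iota derD) (iter_derivation0 derD).
by rewrite (point0 pt_psi) mul0r.
Qed.

(* Induction on the nilpotency indices: both sides agree at 0 and, by the
   Leibniz rule, have equal derivatives. *)
Lemma taylorM u v : taylor (u * v) = taylor u * taylor v.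
Proof.
elim: {u v}(_ + _)%N {-2}u {-2}v (leqnn (nil_index lnD u + nil_index lnD v))
  => [|n IHn] u v Nuv.
  have -> : u = 0 by apply: (nil_index_eq0 derD); lia.
  by rewrite mul0r taylor0 mul0r.
have [->|u_neq0] := eqVneq u 0; first by rewrite mul0r taylor0 mul0r.
have [->|v_neq0] := eqVneq v 0; first by rewrite mulr0 taylor0 mulr0.
apply: eq_poly_deriv; last by rewrite hornerM !horner_taylor0 (pointM pt_psi).
rewrite -taylor_deriv (derivationM derD) taylorD derivM -!taylor_deriv; congr (_ + _).
  by apply: IHn; have := nil_index_deriv derD lnD u_neq0; lia.
by apply: IHn; have := nil_index_deriv derD lnD v_neq0; lia.
Qed.

Lemma taylor1 : taylor 1 = 1.
Proof.
apply/polyP => -[|i]; rewrite coef_taylor coef1 /= ?(point1 pt_psi) ?divr1 //.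
rewrite -iterS iterSr (derivation1 derD) (iter_derivation0 derD).
by rewrite (point0 pt_psi) mul0r.
Qed.

Lemma taylorX u n : taylor (u ^+ n) = taylor u ^+ n.
Proof. by elim: n => [|n IHn]; rewrite ?taylor1 // !exprS taylorM IHn. Qed.

Lemma point_taylor t : is_point iota (fun u => (taylor u).[t]).
Proof.
split=> [u v|u v|k];
  by rewrite ?taylorD ?taylorM ?taylor_iota ?hornerD ?hornerM ?hornerC.
Qed.

Lemma taylor_stationary t :
  (forall u, (taylor (D u)).[t] = 0) -> forall u, (taylor u)^`() = 0.
Proof.
move=> Dt0 u; apply: (derivn_horner_eq0 (t := t)) => k.
by rewrite -derivSn -taylor_iter iterS Dt0.
Qed.

End Taylor.

Definition monoXY (R : nzRingType) (i j : nat) : {poly {poly R}} := ('X^i)%:P * 'X^j.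
Arguments monoXY : simpl never.

Lemma fXYZE (C : fieldType) a b c : fXYZ C a b c = (monoXY C a b)%:P - 'X^c.
Proof. by rewrite /fXYZ /monoXY rmorphM !rmorphXn. Qed.

Section Surface.
Local Open Scope quotient_scope.
Variables (C : numClosedFieldType) (a b c : nat).
Local Notation A := (Aring C a b c).
Local Notation P := (PR C).
Local Notation f := (fXYZ C a b c).
Local Notation piA := (\pi_A : P -> A).
Local Notation is_pt := (is_point (@iotaA C a b c)).

Definition xA : A := piA (varX C).
Definition yA : A := piA (varY C).
Definition zA : A := piA (varZ C).

Lemma piA_eq0 p : piA p = 0 <-> exists h, p = h * f.
Proof.
rewrite -(rmorph0 piA); split => [/eqP|/in_ideal_fP pf]; last first.
  by apply/eqP; rewrite -Quotient.idealrBE subr0.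
by rewrite -Quotient.idealrBE subr0 => /in_ideal_fP.
Qed.

Lemma xyz_relation : xA ^+ a * yA ^+ b = zA ^+ c.
Proof.
have /eqP : piA f = 0 by apply/piA_eq0; exists 1; rewrite mul1r.
by rewrite rmorphB rmorphM !rmorphXn subr_eq0 => /eqP.
Qed.

Lemma piA_monoXY i j : piA (monoXY C i j)%:P = xA ^+ i * yA ^+ j.
Proof. by rewrite /monoXY !rmorphM !rmorphXn. Qed.

Lemma piA_monoXYM i j p :
  piA ((monoXY C i j)%:P * p) = xA ^+ i * yA ^+ j * piA p.
Proof. by rewrite rmorphM /= piA_monoXY. Qed.

Lemma piA_surj u : exists p, u = piA p.
Proof. by exists (repr u); rewrite reprK. Qed.

Lemma PR_ind (Q : P -> Prop) :
  (forall k, Q (const k)) -> (forall p q, Q p -> Q q -> Q (p + q)) ->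
  (forall p, Q p -> Q (p * varX C)) -> (forall p, Q p -> Q (p * varY C)) ->
  (forall p, Q p -> Q (p * varZ C)) -> forall p, Q p.
Proof.
move=> Qk QD QX QY QZ.
have Q0 : Q 0 by have := Qk 0; rewrite /const !polyC0.
have QC1 (p : {poly C}) : Q p%:P%:P.
  by elim/poly_ind: p => // p k Qp; rewrite !polyCD !polyCM; apply/QD/Qk/QX.
have QC2 (p : {poly {poly C}}) : Q p%:P.
  by elim/poly_ind: p => // p k Qp; rewrite !polyCD !polyCM; apply/QD/QC1/QY.
by elim/poly_ind => // p k Qp; apply/QD/QC2/QZ.
Qed.

Definition eval3 (x0 y0 z0 : C) : P -> C :=
  horner_eval x0 \o horner_eval y0%:P \o horner_eval z0%:P%:P.

HB.instance Definition _ x0 y0 z0 := GRing.RMorphism.on (eval3 x0 y0 z0).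

Lemma eval3E x0 y0 z0 p : eval3 x0 y0 z0 p = p.[z0%:P%:P].[y0%:P].[x0].
Proof. by rewrite /eval3 /= !horner_evalE. Qed.

Lemma eval3_const x0 y0 z0 k : eval3 x0 y0 z0 (const k) = k.
Proof. by rewrite eval3E !hornerC. Qed.

Lemma eval3X x0 y0 z0 : eval3 x0 y0 z0 (varX C) = x0.
Proof. by rewrite eval3E !hornerC hornerX. Qed.

Lemma eval3Y x0 y0 z0 : eval3 x0 y0 z0 (varY C) = y0.
Proof. by rewrite eval3E hornerC hornerX hornerC. Qed.

Lemma eval3Z x0 y0 z0 : eval3 x0 y0 z0 (varZ C) = z0.
Proof. by rewrite eval3E hornerX !hornerC. Qed.

Lemma eval3_f x0 y0 z0 : eval3 x0 y0 z0 f = x0 ^+ a * y0 ^+ b - z0 ^+ c.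
Proof. by rewrite rmorphB rmorphM !rmorphXn /= eval3X eval3Y eval3Z. Qed.

Lemma point_eval psi p :
  is_pt psi -> psi (piA p) = eval3 (psi xA) (psi yA) (psi zA) p.
Proof.
move=> pt_psi; elim/PR_ind: p => [k|p q|p|p|p] => [|IHp IHq|IHp|IHp|IHp].
- by rewrite (point_iota pt_psi) eval3_const.
- by rewrite !rmorphD (pointD pt_psi) IHp IHq.
- by rewrite !rmorphM (pointM pt_psi) IHp /= eval3X.
- by rewrite !rmorphM (pointM pt_psi) IHp /= eval3Y.
- by rewrite !rmorphM (pointM pt_psi) IHp /= eval3Z.
Qed.

Section SurfacePoint.
Variables x0 y0 z0 : C.
Hypothesis on_surface : x0 ^+ a * y0 ^+ b = z0 ^+ c.

Definition surface_point (u : A) : C := eval3 x0 y0 z0 (repr u).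

Lemma surface_point_pi p : surface_point (piA p) = eval3 x0 y0 z0 p.
Proof.
have /piA_eq0[h /eqP]: piA (repr (piA p) - p) = 0 by rewrite rmorphB /= reprK subrr.
rewrite /surface_point subr_eq => /eqP->.
by rewrite rmorphD rmorphM /= eval3_f on_surface subrr mulr0 add0r.
Qed.

Lemma is_point_surface : is_pt surface_point.
Proof.
split=> [u v|u v|k].
- by have [p ->] := piA_surj u; have [q ->] := piA_surj v;
    rewrite -rmorphD !surface_point_pi rmorphD.
- by have [p ->] := piA_surj u; have [q ->] := piA_surj v;
    rewrite -rmorphM !surface_point_pi rmorphM.
- by rewrite /iotaA surface_point_pi eval3_const.
Qed.

Lemma surface_point_xyz :
  [/\ surface_point xA = x0, surface_point yA = y0 & surface_point zA = z0].
Proof. by rewrite !surface_point_pi eval3X eval3Y eval3Z. Qed.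

End SurfacePoint.
End Surface.

Lemma bivar_poly_eq0 (R : numDomainType) (u : {poly {poly R}}) :
  (forall x0 y0, x0 != 0 -> y0 != 0 -> u.[y0%:P].[x0] = 0) -> u = 0.
Proof.
move=> u0; apply/polyP => j; rewrite coef0; apply: poly_eq0_nonzero => x0 x0_neq0.
rewrite -horner_evalE -coef_map.
suff -> : map_poly (horner_eval x0) u = 0 by rewrite coef0.
apply: poly_eq0_nonzero => y0 y0_neq0.
have -> : y0 = horner_eval x0 y0%:P by rewrite horner_evalE hornerC.
by rewrite horner_map /= horner_evalE u0.
Qed.

Lemma uniq_roots_XnsubC (C : numClosedFieldType) n (m : C) :
  (0 < n)%N -> m != 0 ->
  exists rs : seq C, [/\ uniq rs, size rs = n & forall z, z \in rs -> z ^+ n = m].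
Proof.
move=> n_gt0 m_neq0; have [rs def_p] := closed_field_poly_normal ('X^n - m%:P).
rewrite lead_coefXnsubC // scale1r in def_p.
exists rs; split.
- rewrite -separable_prod_XsubC -def_p unlock.
  apply/Bezout_eq1_coprimepP; exists ((- m^-1)%:P, (m^-1 / n%:R)%:P * 'X) => /=.
  rewrite derivB derivXn derivC subr0.
  have -> : (- m^-1)%:P * ('X^n - m%:P) = 1 - (m^-1)%:P * 'X^n.
    by rewrite mulrBr -polyCM mulNr mulVf // !polyCN polyC1 opprK mulNr addrC.
  have -> : (m^-1 / n%:R)%:P * 'X * ('X^(n.-1) *+ n) = (m^-1)%:P * 'X^n.
    rewrite mulrnAr -mulrA -exprS prednK // -mulrnAl -polyCMn.
    by rewrite -[(m^-1 / n%:R) *+ n]mulr_natr divfK // pnatr_eq0 -lt0n.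
  by rewrite subrK.
- by have := size_prod_XsubC rs id; rewrite -def_p size_XnsubC // => -[].
- move=> z z_rs; have := root_prod_XsubC rs z; rewrite z_rs -def_p.
  by rewrite /root !hornerE subr_eq0 => /eqP.
Qed.

Section Separation.
Local Open Scope quotient_scope.
Variables (C : numClosedFieldType) (a b c : nat).
Hypothesis c_gt0 : (0 < c)%N.
Local Notation A := (Aring C a b c).
Local Notation P := (PR C).
Local Notation f := (fXYZ C a b c).
Local Notation piA := (\pi_A : P -> A).
Local Notation is_pt := (is_point (@iotaA C a b c)).

(* Over a point (x0, y0) with x0 y0 != 0 the surface has c distinct points. *)
Lemma eq0_on_surface (r : P) : (size r <= c)%N ->
  (forall x0 y0 z0, x0 ^+ a * y0 ^+ b = z0 ^+ c -> eval3 x0 y0 z0 r = 0) ->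
  r = 0.
Proof.
move=> size_r r0; apply/polyP => k; rewrite coef0.
apply: bivar_poly_eq0 => x0 y0 x0_neq0 y0_neq0.
have m_neq0 : x0 ^+ a * y0 ^+ b != 0 by rewrite mulf_neq0 // expf_neq0.
have [rs [uniq_rs size_rs rsP]] := uniq_roots_XnsubC c_gt0 m_neq0.
pose phi := (horner_eval x0 \o horner_eval y0%:P : {rmorphism {poly {poly C}} -> C}).
suff /(congr1 (coefp k)) : map_poly phi r = 0.
  by rewrite /= coef_map coef0 /= !horner_evalE.
apply/eqP/negPn/negP => phir_neq0.
have rs_roots : all (root (map_poly phi r)) rs.
  apply/allP => z /rsP z_root; rewrite /root.
  have -> : z = phi z%:P%:P by rewrite /= !horner_evalE !hornerC.
  by rewrite horner_map /= !horner_evalE -eval3E r0.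
have := max_poly_roots phir_neq0 rs_roots uniq_rs.
by rewrite size_rs ltnNge (leq_trans (size_poly _ _) size_r).
Qed.

(* Reduce modulo -f, which is monic in Z, to a remainder of Z-degree < c. *)
Lemma point_separation u : (forall psi, is_pt psi -> psi u = 0) -> u = 0.
Proof.
have [p ->] := piA_surj u => p0.
have g_monic : 'X^c - (monoXY C a b)%:P \is monic by apply: monicXnsubC.
have := Pdiv.RingMonic.rdivp_eq g_monic p.
set d := Pdiv.CommonRing.rdivp _ _; set r := Pdiv.CommonRing.rmodp _ _ => def_p.
have g_f : 'X^c - (monoXY C a b)%:P = - f by rewrite fXYZE opprB.
suff r0 : r = 0.
  by apply/piA_eq0; exists (- d); rewrite def_p r0 addr0 g_f mulrN mulNr.
apply: eq0_on_surface => [|x0 y0 z0 on_surf].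
  have := Pdiv.Ring.ltn_rmodp p ('X^c - (monoXY C a b)%:P).
  by rewrite size_XnsubC // ltnS => ->; rewrite -size_poly_eq0 size_XnsubC.
have := p0 _ (is_point_surface on_surf).
rewrite (surface_point_pi on_surf) def_p g_f rmorphD rmorphM rmorphN /=.
by rewrite eval3_f on_surf subrr oppr0 mulr0 add0r.
Qed.

End Separation.

Lemma poly_coef0_dropE (R : nzRingType) (p : {poly R}) :
  p = (p`_0)%:P + drop_poly 1 p * 'X.
Proof.
by apply/polyP => -[|i]; rewrite coefD coefC coefMX coef_drop_poly ?addr0 ?add0r ?addn1.
Qed.

Lemma poly_dvdX_dropE (R : nzRingType) (u : {poly {poly R}}) :
  (forall j, (u`_j)`_0 = 0) -> u = 'X%:P * map_poly (drop_poly 1) u.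
Proof.
move=> u0; apply/polyP => j; rewrite coefCM coef_map /=.
by rewrite {1}[u`_j]poly_coef0_dropE u0 polyC0 add0r commr_polyX.
Qed.

Section RelationCoefficients.
Variables (R : numDomainType) (a b c : nat).
Local Notation mono := (monoXY R).
Implicit Types p q r h : {poly {poly R}}.

Lemma coef_monoXYM i j p n :
  (mono i j * p)`_n = 'X^i * (if (n < j)%N then 0 else p`_(n - j)).
Proof. by rewrite -mulrA coefCM coefXnM. Qed.

Let mulrn_eq0_gt0 (V : numDomainType) (v : V) n : (0 < n)%N -> v *+ n = 0 -> v = 0.
Proof. by move=> n_gt0 /eqP; rewrite mulrn_eq0 eqn0Ngt n_gt0 => /eqP. Qed.

Let poly_mulrn_eq0_gt0 (v : {poly R}) n : (0 < n)%N -> v *+ n = 0 -> v = 0.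
Proof.
move=> n_gt0 vn0; apply/polyP => i; rewrite coef0; apply: (mulrn_eq0_gt0 n_gt0).
by rewrite -coefMn vn0 coef0.
Qed.

Lemma relation0_dvdX p q h : (0 < a)%N ->
  mono a.-1 b * p *+ a + mono a b.-1 * q *+ b = h * mono a b ->
  forall j, (p`_j)`_0 = 0.
Proof.
move=> a_gt0 E j; have := congr1 (fun u : {poly {poly R}} => (u`_(j + b))`_a.-1) E.
rewrite /= [h * _]mulrC coefD !coefMn !coef_monoXYM ltnNge leq_addl /= ltnNge.
rewrite (leq_trans (leq_pred b) (leq_addl j b)) /= addnK.
rewrite coefD !coefMn !coefXnM ltnn subnn ltn_predL a_gt0 mul0rn addr0.
exact: mulrn_eq0_gt0.
Qed.

Lemma relation0_dvdY p q h : (0 < b)%N ->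
  mono a.-1 b * p *+ a + mono a b.-1 * q *+ b = h * mono a b -> q`_0 = 0.
Proof.
move=> b_gt0 E; have := congr1 (fun u : {poly {poly R}} => u`_b.-1) E.
rewrite /= [h * _]mulrC coefD !coefMn !coef_monoXYM ltn_predL b_gt0 ltnn subnn.
rewrite !mulr0 mul0rn add0r => /(poly_mulrn_eq0_gt0 b_gt0) /eqP.
by rewrite mulf_eq0 expf_eq0 polyX_eq0 andbF => /eqP.
Qed.

Lemma relation1_dvdX p q r h : (1 < a)%N -> (0 < c)%N ->
  mono a.-1 b * p *+ a + mono a b.-1 * q *+ b - r *+ c = h * mono a b ->
  forall j, (r`_j)`_0 = 0.
Proof.
move=> a_gt1 c_gt0 E j; have := congr1 (fun u : {poly {poly R}} => (u`_j)`_0) E.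
rewrite /= [h * _]mulrC !(coefB, coefD, coefMn, coef_monoXYM, coefN) !coefXnM.
rewrite ltn_predRL a_gt1 (ltnW a_gt1) !mul0rn add0r sub0r => /eqP.
by rewrite oppr_eq0 => /eqP /(mulrn_eq0_gt0 c_gt0).
Qed.

Lemma relation1_dvdY p q r h : (1 < b)%N -> (0 < c)%N ->
  mono a.-1 b * p *+ a + mono a b.-1 * q *+ b - r *+ c = h * mono a b ->
  r`_0 = 0.
Proof.
move=> b_gt1 c_gt0 E; have := congr1 (fun u : {poly {poly R}} => u`_0) E.
rewrite /= [h * _]mulrC !(coefB, coefD, coefMn, coef_monoXYM) ltn_predRL b_gt1.
rewrite (ltnW b_gt1) !mulr0 !mul0rn add0r sub0r => /eqP.
by rewrite oppr_eq0 => /eqP /(poly_mulrn_eq0_gt0 c_gt0).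
Qed.

End RelationCoefficients.

Section DerivationIdeals.
Local Open Scope quotient_scope.
Variables (C : numClosedFieldType) (a b c : nat).
Hypotheses (a_gt1 : (1 < a)%N) (b_gt1 : (1 < b)%N) (c_gt1 : (1 < c)%N).
Local Notation A := (Aring C a b c).
Local Notation P := (PR C).
Local Notation f := (fXYZ C a b c).
Local Notation piA := (\pi_A : P -> A).
Local Notation mono := (monoXY C).
Local Notation xA := (xA C a b c).
Local Notation yA := (yA C a b c).
Local Notation zA := (zA C a b c).

Let a_gt0 : (0 < a)%N := ltnW a_gt1.
Let b_gt0 : (0 < b)%N := ltnW b_gt1.
Let c_gt0 : (0 < c)%N := ltnW c_gt1.

Lemma in_ideal_xz (p : P) : (forall j, ((p`_0)`_j)`_0 = 0) -> in_ideal2 xA zA (piA p).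
Proof.
move=> p0; exists (piA (map_poly (drop_poly 1) p`_0)%:P), (piA (drop_poly 1 p)).
rewrite {1}[p]poly_coef0_dropE {1}(poly_dvdX_dropE p0) rmorphD !rmorphM /=.
by congr (_ + _); apply: mulrC.
Qed.

Lemma in_ideal_yz (p : P) : (p`_0)`_0 = 0 -> in_ideal2 yA zA (piA p).
Proof.
move=> p0; exists (piA (drop_poly 1 p`_0)%:P), (piA (drop_poly 1 p)).
rewrite {1}[p]poly_coef0_dropE {1}[p`_0]poly_coef0_dropE p0 polyC0 add0r.
by rewrite rmorphD !rmorphM /=; congr (_ + _); apply: mulrC.
Qed.

Variable D : A -> A.
Hypothesis derD : is_derivation (@iotaA C a b c) D.

(* [D] applied to the relation x^a y^b = z^c, read in C[X,Y,Z] *)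
Lemma derivation_relation (p q r : P) :
  D xA = piA p -> D yA = piA q -> D zA = piA r ->
  exists h, (mono a.-1 b)%:P * p *+ a + (mono a b.-1)%:P * q *+ b
            - 'X^(c.-1) * r *+ c = h * f.
Proof.
move=> Dx Dy Dz; apply/piA_eq0/eqP; rewrite rmorphB subr_eq0; apply/eqP.
rewrite rmorphD !rmorphMn /= !piA_monoXYM rmorphM rmorphXn /= -Dx -Dy -Dz.
rewrite -(derivationX derD) -xyz_relation (derivationM derD) !(derivationX derD).
by rewrite mulrnAl mulrnAr mulrAC mulrA.
Qed.

Lemma derivation_relation_coefs : exists p q r h : P,
  [/\ D xA = piA p, D yA = piA q, D zA = piA r,
      mono a.-1 b * p`_0 *+ a + mono a b.-1 * q`_0 *+ b = h`_0 * mono a b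
    & mono a.-1 b * p`_c.-1 *+ a + mono a b.-1 * q`_c.-1 *+ b - r`_0 *+ c
        = h`_c.-1 * mono a b].
Proof.
have [p Dx] := piA_surj (D xA); have [q Dy] := piA_surj (D yA).
have [r Dz] := piA_surj (D zA); have [h E] := derivation_relation Dx Dy Dz.
have coef_hf k : (k < c)%N -> (h * f)`_k = h`_k * mono a b.
  by move=> k_lt_c; rewrite fXYZE mulrBr coefB coefMC coefMXn k_lt_c subr0.
exists p, q, r, h; split=> //.
  have := congr1 (fun u : P => u`_0) E; rewrite /= coef_hf //.
  by rewrite coefB coefD !coefMn !coefCM coefXnM ltn_predRL c_gt1 mul0rn subr0.
have := congr1 (fun u : P => u`_c.-1) E; rewrite /= coef_hf ?ltn_predL //.
by rewrite coefB coefD !coefMn !coefCM coefXnM ltnn subnn.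
Qed.

Lemma derivation_x_in_xz : in_ideal2 xA zA (D xA).
Proof.
have [p [q [r [h [-> _ _ E0 _]]]]] := derivation_relation_coefs.
exact: in_ideal_xz (relation0_dvdX a_gt0 E0).
Qed.

Lemma derivation_y_in_yz : in_ideal2 yA zA (D yA).
Proof.
have [p [q [r [h [_ -> _ E0 _]]]]] := derivation_relation_coefs.
exact: in_ideal_yz (relation0_dvdY b_gt0 E0).
Qed.

Lemma derivation_z_in_xz : in_ideal2 xA zA (D zA).
Proof.
have [p [q [r [h [_ _ -> _ E1]]]]] := derivation_relation_coefs.
exact: in_ideal_xz (relation1_dvdX a_gt1 c_gt0 E1).
Qed.

Lemma derivation_z_in_yz : in_ideal2 yA zA (D zA).
Proof.
have [p [q [r [h [_ _ -> _ E1]]]]] := derivation_relation_coefs.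
exact: in_ideal_yz (relation1_dvdY b_gt1 c_gt0 E1).
Qed.

End DerivationIdeals.

Section Rigidity.
Local Open Scope quotient_scope.
Variables (C : numClosedFieldType) (a b c : nat).
Hypotheses (a_gt1 : (1 < a)%N) (b_gt1 : (1 < b)%N) (c_gt1 : (1 < c)%N).
Local Notation A := (Aring C a b c).
Local Notation P := (PR C).
Local Notation piA := (\pi_A : P -> A).
Local Notation is_pt := (is_point (@iotaA C a b c)).
Local Notation xA := (xA C a b c).
Local Notation yA := (yA C a b c).
Local Notation zA := (zA C a b c).

Lemma origin_point :
  exists2 psi0, is_pt psi0 & [/\ psi0 xA = 0, psi0 yA = 0 & psi0 zA = 0].
Proof.
have on_surf : (0 : C) ^+ a * 0 ^+ b = 0 ^+ c.
  by rewrite !expr0n !eqn0Ngt (ltnW a_gt1) (ltnW c_gt1) mul0r.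
by exists (surface_point 0 0 0); [apply: is_point_surface | apply: surface_point_xyz].
Qed.

Lemma yaxis_restriction u : exists g : {poly C}, forall psi,
  is_pt psi -> psi xA = 0 -> psi zA = 0 -> psi u = g.[psi yA].
Proof.
have [p ->] := piA_surj u; exists (map_poly (horner_eval 0) p.[0]).
move=> psi pt_psi x0 z0; rewrite (point_eval _ pt_psi) x0 z0 eval3E !polyC0.
have y_eval : psi yA = horner_eval 0 (psi yA)%:P by rewrite horner_evalE hornerC.
by rewrite [in RHS]y_eval horner_map /= horner_evalE.
Qed.

Lemma xaxis_restriction u : exists g : {poly C}, forall psi,
  is_pt psi -> psi yA = 0 -> psi zA = 0 -> psi u = g.[psi xA].
Proof.
have [p ->] := piA_surj u; exists p.[0].[0] => psi pt_psi y0 z0.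
by rewrite (point_eval _ pt_psi) y0 z0 eval3E !polyC0.
Qed.

Variable D : A -> A.
Hypotheses (derD : is_derivation (@iotaA C a b c) D) (lnD : locally_nilpotent D).
Local Notation taylor := (taylor lnD).

Lemma point_derivation_eq0 psi : is_pt psi ->
  psi (D xA) = 0 -> psi (D yA) = 0 -> psi (D zA) = 0 -> forall u, psi (D u) = 0.
Proof.
move=> pt_psi Dx0 Dy0 Dz0 u; have [p ->] := piA_surj u.
elim/PR_ind: p => [k|p q IHp IHq|p IHp|p IHp|p IHp].
- by rewrite (derivation_iota derD k) (point0 pt_psi).
- by rewrite rmorphD /= (derivationD derD) (pointD pt_psi) IHp IHq addr0.
all: rewrite rmorphM /= (derivationM derD) (pointD pt_psi) !(pointM pt_psi) IHp.
- by rewrite Dx0 mul0r mulr0 addr0.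
- by rewrite Dy0 mul0r mulr0 addr0.
- by rewrite Dz0 mul0r mulr0 addr0.
Qed.

(* The line s = z = 0 of the surface is D-stable, and on it D w is a polynomial
   in w vanishing at the origin. *)
Section InvariantLine.
Variables s w : A.
Hypotheses (Ds : in_ideal2 s zA (D s)) (Dz : in_ideal2 s zA (D zA))
  (Dw : in_ideal2 w zA (D w)).
Hypothesis line_restriction : forall u, exists g : {poly C}, forall psi,
  is_pt psi -> psi s = 0 -> psi zA = 0 -> psi u = g.[psi w].
Hypothesis origin :
  exists2 psi0, is_pt psi0 & [/\ psi0 s = 0, psi0 w = 0 & psi0 zA = 0].

Lemma taylor_on_line psi : is_pt psi -> psi s = 0 -> psi zA = 0 ->
  taylor psi s = 0 /\ taylor psi zA = 0.
Proof.
move=> pt_psi s0 z0; have [gs [hs Ds_eq]] := Ds; have [gz [hz Dz_eq]] := Dz.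
apply: (linear_ode_eq0 (gx := taylor psi gs) (hx := taylor psi hs)
                       (gz := taylor psi gz) (hz := taylor psi hz)).
- rewrite -(taylor_deriv derD lnD pt_psi) Ds_eq (taylorD derD lnD pt_psi).
  by rewrite !(taylorM derD lnD pt_psi).
- rewrite -(taylor_deriv derD lnD pt_psi) Dz_eq (taylorD derD lnD pt_psi).
  by rewrite !(taylorM derD lnD pt_psi).
- by rewrite -horner_coef0 (horner_taylor0 derD lnD pt_psi).
- by rewrite -horner_coef0 (horner_taylor0 derD lnD pt_psi).
Qed.

Lemma derivation_on_line psi :
  is_pt psi -> psi s = 0 -> psi zA = 0 -> psi (D w) = 0.
Proof.
move=> pt_psi s0 z0; have [s_t z_t] := taylor_on_line pt_psi s0 z0.
have [g Dw_g] := line_restriction (D w).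
have g0 : g.[0] = 0.
  have [psi0 pt_psi0 [s00 w00 z00]] := origin.
  by rewrite -w00 -Dw_g // (point_in_ideal2 pt_psi0 Dw).
have w' : (taylor psi w)^`() = g \Po taylor psi w.
  apply/eqP; rewrite -subr_eq0; apply/eqP; apply: poly_eq0_nonzero => t _.
  have pt_t := point_taylor derD lnD pt_psi t.
  rewrite hornerD hornerN horner_comp -(taylor_deriv derD lnD pt_psi).
  by rewrite (Dw_g _ pt_t) ?subrr //= ?s_t ?z_t horner0.
rewrite -(horner_taylor0 derD lnD pt_psi) (taylor_deriv derD lnD pt_psi).
by rewrite (deriv_eq_comp_eq0 w' g0) horner0.
Qed.

End InvariantLine.

Let Dx_xz : in_ideal2 xA zA (D xA). Proof. exact: derivation_x_in_xz. Qed.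
Let Dy_yz : in_ideal2 yA zA (D yA). Proof. exact: derivation_y_in_yz. Qed.
Let Dz_xz : in_ideal2 xA zA (D zA). Proof. exact: derivation_z_in_xz. Qed.
Let Dz_yz : in_ideal2 yA zA (D zA). Proof. exact: derivation_z_in_yz. Qed.

Lemma derivation_vanish_yaxis psi : is_pt psi -> psi xA = 0 -> psi zA = 0 ->
  forall u, psi (D u) = 0.
Proof.
move=> pt_psi x0 z0; apply: point_derivation_eq0 => //.
- exact: point_in_ideal2 pt_psi Dx_xz x0 z0.
- exact: derivation_on_line Dx_xz Dz_xz Dy_yz yaxis_restriction origin_point
    _ pt_psi x0 z0.
- exact: point_in_ideal2 pt_psi Dz_xz x0 z0.
Qed.

Lemma derivation_vanish_xaxis psi : is_pt psi -> psi yA = 0 -> psi zA = 0 ->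
  forall u, psi (D u) = 0.
Proof.
move=> pt_psi y0 z0; apply: point_derivation_eq0 => //.
- have [psi0 pt_psi0 [x00 y00 z00]] := origin_point.
  have origin : exists2 psi0, is_pt psi0 &
      [/\ psi0 yA = 0, psi0 xA = 0 & psi0 zA = 0] by exists psi0.
  exact: derivation_on_line Dy_yz Dz_yz Dx_xz xaxis_restriction origin _ pt_psi y0 z0.
- exact: point_in_ideal2 pt_psi Dy_yz y0 z0.
- exact: point_in_ideal2 pt_psi Dz_yz y0 z0.
Qed.

(* If x(t) has a root t0 then z(t0) = 0 too, so the curve passes through a point
   of the x-axis or y-axis where D vanishes, and it is constant. *)
Lemma taylor_xyz_const psi : is_pt psi ->
  [/\ (taylor psi xA)^`() = 0, (taylor psi yA)^`() = 0 & (taylor psi zA)^`() = 0].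
Proof.
move=> pt_psi.
set X := taylor psi xA; set Y := taylor psi yA; set Z := taylor psi zA.
have XYZ : Z ^+ c = X ^+ a * Y ^+ b.
  by rewrite -!(taylorX derD lnD pt_psi) -(taylorM derD lnD pt_psi) xyz_relation.
have Z_root t : X.[t] = 0 \/ Y.[t] = 0 -> Z.[t] = 0.
  move=> XY0; apply/eqP; suff : Z.[t] ^+ c == 0 by rewrite expf_eq0 (ltnW c_gt1).
  rewrite -horner_exp XYZ hornerM !horner_exp mulf_eq0 !expf_eq0.
  by rewrite (ltnW a_gt1) (ltnW b_gt1); case: XY0 => ->; rewrite eqxx ?orbT.
have stationary t : (forall u, (taylor psi (D u)).[t] = 0) ->
    [/\ X^`() = 0, Y^`() = 0 & Z^`() = 0].
  by move=> Dt0; split; apply: (taylor_stationary derD pt_psi Dt0).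
have pt_t := point_taylor derD lnD pt_psi.
have [/size1_polyC X_cst|X_gt1] := leqP (size X) 1; last first.
  have [t /eqP Xt0] : exists t, root X t.
    by apply/closed_rootP; rewrite neq_ltn X_gt1 orbT.
  by apply/stationary/(derivation_vanish_yaxis (pt_t t)) => //; apply: Z_root; left.
have [/size1_polyC Y_cst|Y_gt1] := leqP (size Y) 1; last first.
  have [t /eqP Yt0] : exists t, root Y t.
    by apply/closed_rootP; rewrite neq_ltn Y_gt1 orbT.
  by apply/stationary/(derivation_vanish_xaxis (pt_t t)) => //; apply: Z_root; right.
split; [by rewrite X_cst derivC | by rewrite Y_cst derivC |].
have /(size_exp_leq1 (ltnW c_gt1)) /size1_polyC -> : (size (Z ^+ c) <= 1)%N.
  by rewrite XYZ X_cst Y_cst -!rmorphXn -rmorphM size_polyC leq_b1.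
exact: derivC.
Qed.

Lemma derivation_eq0 u : D u = 0.
Proof.
apply: (point_separation (ltnW c_gt1)) => psi pt_psi.
have [X' Y' Z'] := taylor_xyz_const pt_psi.
by apply: point_derivation_eq0; rewrite -?(horner_taylor0 derD lnD pt_psi)
  ?(taylor_deriv derD lnD pt_psi) ?X' ?Y' ?Z' ?horner0.
Qed.

End Rigidity.

Theorem theorem4p2 (C : numClosedFieldType) (a b c : nat)
  (ha : (2 <= a)%N) (hb : (2 <= b)%N) (hc : (2 <= c)%N) :
  rigid (@iotaA C a b c).
Proof. by move=> D derD lnD u; apply: (derivation_eq0 ha hb hc derD lnD). Qed.
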